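(* Let $G$ be a vertex-weighted multigraph and let $H$ be a spanning submultigraph of $G$. If $H$ is admissibly contractible, then so is $G$.
   Context: A vertex-weighted multigraph is a quadruple $G=(V,E,r,\mathrm{wt})$ with $V$ a finite set of vertices, $E$ a finite set of edges, $r$ assigning to each edge an unordered pair $\{v,w\}$ of distinct vertices (its endpoints), and $\mathrm{wt}:V\to\mathbb{Z}$. Two vertices are adjacent if some edge has them as endpoints. $\deg(v)=\#\{e\in E: v\in r(e)\}$ and $\mathrm{rdeg}(v)$ is the number of vertices adjacent to $v$. $G_1$ is a submultigraph of $G_2$ if there are injective maps $\phi:V_1\to V_2$, $\psi:E_1\to E_2$ with $r_2\circ\psi=\phi\circ r_1$ and $\mathrm{wt}_1\leq\mathrm{wt}_2\circ\phi$; it is spanning if moreover $\phi$ is bijective. For adjacent vertices $v,w$ of $G$, the contraction $G'$ of $G$ with respect to $\{v,w\}$ is obtained by identifying $v$ and $w$ to one vertex of weight $\mathrm{wt}(v)+\mathrm{wt}(w)$, deleting all edges between $v$ and $w$, keeping all other edges (with endpoints replaced via the identification) and all other weights. Let $m=\#\{e: r(e)=\{v,w\}\}$. The contraction is admissible if, for some labeling of the pair as $v,w$, there is an integer $0\leq l<m$ such that: every vertex $x\notin\{v,w\}$ has $\deg(x)\geq 3$; $\mathrm{wt}(v)\geq l+1$ and $\mathrm{wt}(w)\geq l+2$; $\deg(v)-m+l\geq 3$ and $\deg(w)-m+l\geq 3$. $G$ is admissibly contractible if there is a sequence $G=G_0,G_1,\dots,G_k$ with $G_k$ a single vertex and each $G_i$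 an admissible contraction of $G_{i-1}$. *)

From mathcomp Require Import all_boot all_order all_algebra.
Unset Implicit Arguments. Unset Strict Implicit. Unset Printing Implicit Defensive.

Import Order.TTheory GRing.Theory Num.Theory.

(* The unordered endpoint pair
   r(e) = {v, w} is stored as an ordered pair [ends e] with distinct
   components; all uses only depend on the underlying unordered pair. *)
Record mgraph := MGraph {
  V : finType;
  E : finType;
  ends : E -> V * V;
  ends_ne : forall e, (ends e).1 != (ends e).2;
  wt : V -> int
}.
Arguments ends {m} e.
Arguments wt {m} x.

Definition joins {G : mgraph} (e : E G) (x y : V G) : bool :=
  (ends e == (x, y)) || (ends e == (y, x)).

Definition incident {G : mgraph} (e : E G) (x : V G) : bool :=
  ((ends e).1 == x) || ((ends e).2 == x).

Definition adjacent {G : mgraph} (x y : V G) : bool :=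
  [exists e, joins e x y].

Definition deg {G : mgraph} (x : V G) : nat := #|[set e | incident e x]|.

Definition mult {G : mgraph} (x y : V G) : nat := #|[set e | joins e x y]|.

Definition submultigraph_via (G1 G2 : mgraph) (phi : V G1 -> V G2)
    (psi : E G1 -> E G2) : Prop :=
  injective phi /\ injective psi /\
  (forall e, joins (psi e) (phi (ends e).1) (phi (ends e).2)) /\
  (forall x, (wt x <= wt (phi x))%R).

Definition submultigraph (G1 G2 : mgraph) : Prop :=
  exists (phi : V G1 -> V G2) (psi : E G1 -> E G2), submultigraph_via G1 G2 phi psi.

Definition spanning_submultigraph (G1 G2 : mgraph) : Prop :=
  exists (phi : V G1 -> V G2) (psi : E G1 -> E G2), submultigraph_via G1 G2 phi psi /\ bijective phi.

(* G' is (up to isomorphism) the contraction of G with respect to {v, w}: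
   phi : V G -> V G' identifies exactly v and w and is onto; psi : E G -> E G'
   restricted to the edges not between v and w is a bijection onto E G'
   compatible with endpoints (replaced via the identification). *)
Definition contraction_of (G G' : mgraph) (v w : V G) : Prop :=
  adjacent v w /\
  exists (phi : V G -> V G') (psi : E G -> E G'),
    (forall y, exists x, phi x = y) /\
    (forall x y, phi x = phi y <-> (x = y \/ (x = v /\ y = w) \/ (x = w /\ y = v))) /\
    (forall x, x != v -> x != w -> wt (phi x) = wt x) /\
    wt (phi v) = (wt v + wt w)%R /\
    (forall e1 e2, ~~ joins e1 v w -> ~~ joins e2 v w -> psi e1 = psi e2 -> e1 = e2) /\
    (forall e', exists e, ~~ joins e v w /\ psi e = e') /\
    (forall e, ~~ joins e v w -> joins (psi e) (phi (ends e).1) (phi (ends e).2)).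

Definition admissible_contraction (G G' : mgraph) : Prop :=
  exists (v w : V G), contraction_of G G' v w /\
    exists l : nat, (l < mult v w)%N /\
      (forall x, x != v -> x != w -> (3 <= deg x)%N) /\
      ((l%:Z + 1)%R <= wt v)%R /\ ((l%:Z + 2)%R <= wt w)%R /\
      (3%:Z <= (deg v)%:Z - (mult v w)%:Z + l%:Z)%R /\
      (3%:Z <= (deg w)%:Z - (mult v w)%:Z + l%:Z)%R.

Inductive adm_contractible : mgraph -> Prop :=
  | adm_single G : #|V G| = 1%N -> adm_contractible G
  | adm_step G G' : admissible_contraction G G' -> adm_contractible G' ->
      adm_contractible G.

From mathcomp Require Import all_boot all_order all_algebra zify.
Import Order.TTheory GRing.Theory Num.Theory.

(* Induct along the contraction sequence of H.  If H' is the admissible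
   contraction of H at {v, w}, contract G at {phi v, phi w}: the spanning
   embedding (phi, psi) of H into G descends to a spanning embedding of H' into
   this contraction of G.  The contraction of G is again admissible, because
   phi is a bijection on vertices, weights only grow, and the injective edge
   map psi can only increase the degree of a vertex, the multiplicity of a
   pair, and the number deg v - mult v w of edges at v not going to w. *)

Set Implicit Arguments. Unset Strict Implicit.

Lemma joinsE (G : mgraph) (e : E G) a b :
  joins e a b <->
  ((ends e).1 = a /\ (ends e).2 = b) \/ ((ends e).1 = b /\ (ends e).2 = a).
Proof.
rewrite /joins; case: (ends e) => [x y] /=; split.
- by case/orP => /eqP [-> ->]; [left | right].
- by case=> [[-> ->] | [-> ->]]; rewrite eqxx ?orbT.
Qed.

Lemma joins_sym (G : mgraph) (e : E G) a b : joins e a b = joins e b a.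
Proof. by rewrite /joins orbC. Qed.

Lemma joins_ends (G : mgraph) (e : E G) : joins e (ends e).1 (ends e).2.
Proof. by apply/joinsE; left. Qed.

Lemma joins_incident (G : mgraph) (e : E G) a b : joins e a b -> incident e a.
Proof. by case/joinsE => [[<- _] | [_ <-]]; rewrite /incident eqxx ?orbT. Qed.

Lemma joins_pairs (G : mgraph) (e : E G) a b c d :
  joins e a b -> joins e c d -> (a = c /\ b = d) \/ (a = d /\ b = c).
Proof.
by move=> /joinsE [[<- <-] | [<- <-]] /joinsE [[-> ->] | [-> ->]]; auto.
Qed.

Lemma adjacent_neq (G : mgraph) (x y : V G) : adjacent x y -> x != y.
Proof.
case/existsP=> e /joinsE [[<- <-] | [<- <-]]; last rewrite eq_sym;
  exact: ends_ne.
Qed.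

Lemma mult_sym (G : mgraph) (x y : V G) : mult x y = mult y x.
Proof. by apply: eq_card => e; rewrite !inE joins_sym. Qed.

Lemma deg_split (G : mgraph) (x y : V G) :
  deg x = (mult x y + #|[set e | incident e x && ~~ joins e x y]|)%N.
Proof.
rewrite /deg /mult -(cardsID [set e | joins e x y] [set e | incident e x]).
congr (_ + _)%N; apply: eq_card => e; rewrite !inE.
- by case J: (joins e x y); rewrite ?andbF // (joins_incident J).
- by rewrite andbC.
Qed.

Lemma inj_surj_bij (A B : finType) (f : A -> B) :
  injective f -> (forall y, exists x, f x = y) -> bijective f.
Proof.
move=> f_inj f_surj; apply: (inj_card_bij f_inj).
rewrite -(card_codom f_inj); apply/subset_leq_card/subsetP => y _.
by have [x <-] := f_surj y; apply: codom_f.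
Qed.

Section Submultigraph.

Variables (G1 G2 : mgraph) (phi : V G1 -> V G2) (psi : E G1 -> E G2).
Hypothesis sub : submultigraph_via G1 G2 phi psi.

Lemma sub_joins e a b : joins e a b -> joins (psi e) (phi a) (phi b).
Proof.
case: sub => _ [_ [psi_ends _]].
case/joinsE=> [[<- <-] | [<- <-]]; last rewrite joins_sym; exact: psi_ends.
Qed.

Lemma sub_not_joins e a b : ~~ joins e a b -> ~~ joins (psi e) (phi a) (phi b).
Proof.
case: sub => phi_inj _; apply: contra => J.
case: (joins_pairs J (sub_joins (joins_ends e))) => [[] | []] /phi_inj -> /phi_inj ->;
  last rewrite joins_sym; exact: joins_ends.
Qed.

Lemma sub_incident e x : incident e x -> incident (psi e) (phi x).
Proof.
case/orP=> /eqP <-; first exact: joins_incident (sub_joins (joins_ends e)).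
by apply: (@joins_incident _ _ _ (phi (ends e).1)); rewrite joins_sym;
  apply/sub_joins/joins_ends.
Qed.

Lemma sub_adjacent x y : adjacent x y -> adjacent (phi x) (phi y).
Proof. by case/existsP=> e J; apply/existsP; exists (psi e); apply: sub_joins. Qed.

Lemma sub_card_edges (P : pred (E G1)) (Q : pred (E G2)) :
  (forall e, P e -> Q (psi e)) -> #|[set e | P e]| <= #|[set e | Q e]|.
Proof.
case: sub => _ [psi_inj _] PQ; rewrite -(card_imset _ psi_inj).
apply/subset_leq_card/subsetP => _ /imsetP [e Pe ->]; rewrite !inE in Pe *.
exact: PQ.
Qed.

Lemma sub_deg x : deg x <= deg (phi x).
Proof. by apply: sub_card_edges => e; apply: sub_incident. Qed.

Lemma sub_mult x y : mult x y <= mult (phi x) (phi y).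
Proof. by apply: sub_card_edges => e; apply: sub_joins. Qed.

Lemma sub_deg_mult x y :
  ((deg x)%:Z - (mult x y)%:Z <= (deg (phi x))%:Z - (mult (phi x) (phi y))%:Z)%R.
Proof.
have : #|[set e | incident e x && ~~ joins e x y]| <=
       #|[set e | incident e (phi x) && ~~ joins e (phi x) (phi y)]|.
  apply: sub_card_edges => e /andP [inc nj].
  by rewrite sub_incident ?sub_not_joins.
rewrite (deg_split x y) (deg_split (phi x) (phi y)); lia.
Qed.

End Submultigraph.

Lemma spanning_submultigraph_trans (G1 G2 G3 : mgraph) :
  spanning_submultigraph G1 G2 -> spanning_submultigraph G2 G3 ->
  spanning_submultigraph G1 G3.
Proof.
move=> [phi [psi [sub phi_bij]]] [phi' [psi' [sub' phi'_bij]]].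
exists (phi' \o phi), (psi' \o psi); split; last exact: bij_comp.
have [phi_inj [psi_inj [_ wt_phi]]] := sub.
have [phi'_inj [psi'_inj [_ wt_phi']]] := sub'.
do !split; try exact: inj_comp.
- by move=> e; apply/(sub_joins sub')/(sub_joins sub)/joins_ends.
- by move=> x; apply: le_trans (wt_phi x) (wt_phi' _).
Qed.

Section Contraction.

Variables (G : mgraph) (v w : V G).
Hypothesis vw : v != w.

Definition contr_V : finType := {x : V G | x != w}.
Definition contr_E : finType := {e : E G | ~~ joins e v w}.

Definition contr_proj (x : V G) : contr_V := insubd (exist _ v vw) x.

Lemma val_contr_proj x : val (contr_proj x) = if x != w then x else v.
Proof. by rewrite /contr_proj val_insubd. Qed.

Lemma contr_projK (y : contr_V) : contr_proj (val y) = y.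
Proof. by apply: val_inj; rewrite val_contr_proj (valP y). Qed.

Lemma contr_proj_surj y : exists x, contr_proj x = y.
Proof. by exists (val y); apply: contr_projK. Qed.

Lemma contr_proj_eq x y :
  contr_proj x = contr_proj y <-> x = y \/ (x = v /\ y = w) \/ (x = w /\ y = v).
Proof.
split.
- move=> /(congr1 val); rewrite !val_contr_proj.
  by case: (eqVneq x w) => [-> | _]; case: (eqVneq y w) => [-> | _] /= h; subst; auto.
- case=> [-> // | [[-> ->] | [-> ->]]]; apply: val_inj;
    by rewrite !val_contr_proj vw eqxx.
Qed.

Lemma contr_ends_ne (e : contr_E) :
  (contr_proj (ends (val e)).1, contr_proj (ends (val e)).2).1 !=
  (contr_proj (ends (val e)).1, contr_proj (ends (val e)).2).2.
Proof.
apply/eqP=> /= /contr_proj_eq [eq_ends | vw_ends].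
- by move: (ends_ne _ (val e)); rewrite eq_ends eqxx.
- move/negP: (valP e); apply; apply/joinsE.
  by case: vw_ends => [[-> ->] | [-> ->]]; auto.
Qed.

Definition contr_wt (y : contr_V) : int :=
  if val y == v then (wt v + wt w)%R else wt (val y).

Definition contr : mgraph :=
  @MGraph contr_V contr_E
    (fun e => (contr_proj (ends (val e)).1, contr_proj (ends (val e)).2))
    contr_ends_ne contr_wt.

Lemma contr_wt_proj x :
  wt (contr_proj x : V contr) =
  if (x == v) || (x == w) then (wt v + wt w)%R else wt x.
Proof.
rewrite /= /contr_wt val_contr_proj.
case: (eqVneq x w) => [-> | xw] /=; first by rewrite eqxx orbT.
by rewrite orbF.
Qed.

Lemma contr_joins e a b (nj : ~~ joins e v w) :
  joins e a b -> joins (exist _ e nj : E contr) (contr_proj a) (contr_proj b).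
Proof.
by case/joinsE=> [[<- <-] | [<- <-]]; last rewrite joins_sym; apply: joins_ends.
Qed.

(* [contraction_of] asks for an edge map defined on all of [E G]; the edges
   between [v] and [w] are sent to an arbitrary surviving edge [e0]. *)
Lemma contr_contraction_of (e0 : contr_E) :
  adjacent v w -> contraction_of G contr v w.
Proof.
move=> adj; split=> //.
exists contr_proj, (insubd e0); do !split.
- exact: contr_proj_surj.
- by move/contr_proj_eq.
- by move/contr_proj_eq.
- by move=> x xv xw; rewrite contr_wt_proj (negbTE xv) (negbTE xw).
- by rewrite contr_wt_proj eqxx.
- by move=> e1 e2 nj1 nj2 /(congr1 val); rewrite !val_insubd /= nj1 nj2.
- by move=> e'; exists (val e'); rewrite (valP e') valKd.
- move=> e nj.
  have -> : insubd e0 e = exist _ e nj by apply: val_inj; rewrite val_insubd nj.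
  exact/contr_joins/joins_ends.
Qed.

End Contraction.

Lemma contraction_of_spanning_contr (H H' : mgraph) (v w : V H) (vw : v != w) :
  contraction_of H H' v w -> spanning_submultigraph H' (contr vw).
Proof.
move=> [_ [phi [psi [phi_surj [phi_eq [wt_phi [wt_phi_v [_ [psi_surj psi_joins]]]]]]]]].
have [sV sVK] := fin_all_exists phi_surj.
have [sE sEP] := fin_all_exists psi_surj.
have sE_nj e' : ~~ joins (sE e') v w by case: (sEP e').
have sEK e' : psi (sE e') = e' by case: (sEP e').
pose fV y : V (contr vw) := contr_proj vw (sV y).
pose fE e' : E (contr vw) := exist _ (sE e') (sE_nj e').
have fV_phi x : fV (phi x) = contr_proj vw x.
  by apply/contr_proj_eq/phi_eq; rewrite sVK.
have fV_inj : injective fV by move=> y1 y2 /contr_proj_eq /phi_eq; rewrite !sVK.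
exists fV, fE; split; last first.
  apply: inj_surj_bij fV_inj _ => z.
  by have [x <-] := contr_proj_surj vw z; exists (phi x); apply: fV_phi.
do !split=> //.
- by move=> e1 e2 /(congr1 val) /= eq_sE; rewrite -(sEK e1) -(sEK e2) eq_sE.
- move=> e'; have := psi_joins _ (sE_nj e'); rewrite sEK.
  case/joinsE=> [[-> ->] | [-> ->]]; rewrite !fV_phi; last rewrite joins_sym;
    exact/contr_joins/joins_ends.
- move=> y; rewrite -[in leLHS](sVK y) /fV contr_wt_proj.
  case: (eqVneq (sV y) v) => [-> | xv] /=; first by rewrite wt_phi_v.
  case: (eqVneq (sV y) w) => [-> | xw] /=; last by rewrite wt_phi.
  have /phi_eq -> : w = v \/ (w = v /\ v = w) \/ (w = w /\ v = v) by auto.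
  by rewrite wt_phi_v.
Qed.

Lemma spanning_contr (H G : mgraph) (phi : V H -> V G) (psi : E H -> E G)
    (v w : V H) (vw : v != w) (vw' : phi v != phi w) :
  submultigraph_via H G phi psi -> bijective phi ->
  spanning_submultigraph (contr vw) (contr vw').
Proof.
move=> sub phi_bij; have [phi_inj [psi_inj [_ wt_phi]]] := sub.
have proj_phi_eq x y :
    contr_proj vw' (phi x) = contr_proj vw' (phi y) <->
    contr_proj vw x = contr_proj vw y.
  by rewrite !contr_proj_eq; split=> [[|[[]|[]]] | [|[[]|[]]]]; do ?move/phi_inj;
    do ?move->; auto.
pose fV (y : V (contr vw)) : V (contr vw') := contr_proj vw' (phi (val y)).
pose fE (e : E (contr vw)) : E (contr vw') :=
  exist _ (psi (val e)) (sub_not_joins sub (valP e)).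
have fV_proj x : fV (contr_proj vw x) = contr_proj vw' (phi x).
  by apply/proj_phi_eq; rewrite contr_projK.
have fV_inj : injective fV.
  by move=> y1 y2 /proj_phi_eq; rewrite !contr_projK.
exists fV, fE; split; last first.
  apply: inj_surj_bij fV_inj _ => z; have [g phiK phiV] := phi_bij.
  have [x <-] := contr_proj_surj vw' z.
  by exists (contr_proj vw (g x)); rewrite fV_proj phiV.
do !split=> //.
- by move=> e1 e2 /(congr1 val) /psi_inj eq_e; apply: val_inj.
- move=> e; rewrite !fV_proj.
  exact/contr_joins/(sub_joins sub)/joins_ends.
- move=> y; rewrite -[in leLHS](contr_projK vw y) -[in leRHS](contr_projK vw y).
  rewrite fV_proj !contr_wt_proj !(inj_eq phi_inj).
  by case: ifP => _; rewrite ?lerD ?wt_phi.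
Qed.

(* [admissible_contraction G G'] unfolds to
   [exists v w, contraction_of G G' v w /\ admissible_at v w]. *)
Definition admissible_at (G : mgraph) (v w : V G) : Prop :=
  exists l : nat, (l < mult v w)%N /\
    (forall x, x != v -> x != w -> (3 <= deg x)%N) /\
    ((l%:Z + 1)%R <= wt v)%R /\ ((l%:Z + 2)%R <= wt w)%R /\
    (3%:Z <= (deg v)%:Z - (mult v w)%:Z + l%:Z)%R /\
    (3%:Z <= (deg w)%:Z - (mult v w)%:Z + l%:Z)%R.

Lemma admissible_at_spanning (H G : mgraph) (phi : V H -> V G) (psi : E H -> E G)
    (v w : V H) :
  submultigraph_via H G phi psi -> bijective phi ->
  admissible_at v w -> admissible_at (phi v) (phi w).
Proof.
move=> sub [g _ phiV] [l [lt_l_mult [deg3 [wt_v [wt_w [deg_v deg_w]]]]]].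
have [_ [_ [_ wt_phi]]] := sub.
have mult_le := sub_mult sub v w.
have deg_mult_v := sub_deg_mult sub v w.
have deg_mult_w := sub_deg_mult sub w v.
rewrite mult_sym [mult (phi w) _]mult_sym in deg_mult_w.
exists l; do !split.
- exact: leq_trans lt_l_mult mult_le.
- move=> x xv xw; rewrite -(phiV x); apply: leq_trans (sub_deg sub _).
  by apply: deg3; [move: xv | move: xw]; apply: contra_neq => <-; rewrite phiV.
- exact: le_trans wt_v (wt_phi v).
- exact: le_trans wt_w (wt_phi w).
- lia.
- lia.
Qed.

Lemma admissible_contraction_spanning (H H' G : mgraph) :
  spanning_submultigraph H G -> admissible_contraction H H' ->
  exists2 G', admissible_contraction G G' & spanning_submultigraph H' G'.
Proof.
move=> [phi [psi [sub phi_bij]]] [v [w [contr_H adm_vw]]].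
have vw : v != w by case: contr_H => /adjacent_neq.
have vw' : phi v != phi w by rewrite (bij_eq phi_bij).
have H'G' := spanning_submultigraph_trans
  (contraction_of_spanning_contr vw contr_H) (spanning_contr vw vw' sub phi_bij).
exists (contr vw') => //.
exists (phi v), (phi w); split; last exact: (admissible_at_spanning sub phi_bij adm_vw).
case: contr_H => adj [_ [psH _]]; have [e _] := existsP adj.
have [_ [psi' _]] := H'G'.
exact: contr_contraction_of vw' (psi' (psH e)) (sub_adjacent sub adj).
Qed.

Unset Implicit Arguments.

Theorem lemma3p4 (G H : mgraph) :
  spanning_submultigraph H G -> adm_contractible H -> adm_contractible G.
Proof.
move=> HG Hc; elim: H / Hc G HG => [H H1 G [phi [_ [_ phi_bij]]] | H H' HH' _ IH G HG].
- by apply: adm_single; rewrite -(bij_eq_card phi_bij).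
- have [G' GG' H'G'] := admissible_contraction_spanning HG HH'.
  exact: adm_step GG' (IH _ H'G').
Qed.
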